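(* Let $k\ge 2$ and let $x_0\in\Sigma_k^*$ be any word. Then the sequence $(x_n)_{n\ge 0}$ defined by $x_{n+1}=\mathcal P_k(x_n)$ is eventually periodic: there exist integers $N\ge 0$ and $p\ge 1$ such that $x_{n+p}=x_n$ for all $n\ge N$. In particular, the sequence eventually enters a fixed point ($p=1$) or a cycle.
   Context: Fix an integer $k\ge 2$ and the alphabet $\Sigma_k=\{0,1,\dots,k-1\}$. A word is a finite nonempty string of letters of $\Sigma_k$ (leading zeros allowed); $\Sigma_k^*$ denotes the set of words. For a word $x$, $|x|$ denotes its length and $|x|_i$ the number of occurrences of the letter $i$ in $x$. For a positive integer $c$, $[c]_k$ denotes its standard base-$k$ representation without leading zeros, viewed as a word over $\Sigma_k$; it has $\lfloor\log_k c\rfloor+1$ letters. The map $\mathcal P_k:\Sigma_k^*\to\Sigma_k^*$ is defined as follows: if $b_1>b_2>\dots>b_r$ are exactly the letters occurring in $x$ (i.e. those with $|x|_{b_j}\neq 0$), then $\mathcal P_k(x)=[|x|_{b_1}]_k\,b_1\,[|x|_{b_2}]_k\,b_2\cdots[|x|_{b_r}]_k\,b_r$ (concatenation). For example, for $k=10$, $\mathcal P_{10}(123)=131211$. A fixed point is a word $x$ with $\mathcal P_k(x)=x$. *)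

From mathcomp Require Import all_boot.
Set Implicit Arguments. Unset Strict Implicit. Unset Printing Implicit Defensive.

(* A word over Sigma_k = {0,...,k-1}: a finite nonempty sequence of naturals,
   each < k.  Words are represented as seq nat; first element = leftmost letter. *)
Definition is_word (k : nat) (x : seq nat) : Prop :=
  x <> [::] /\ all (fun a => a < k) x.

(* [c]_k : standard base-k representation of c > 0, most significant digit
   first, with floor(log_k c) + 1 digits (trunc_log k c = floor(log_k c)). *)
Definition base_rep (k c : nat) : seq nat :=
  let L := (trunc_log k c).+1 in
  [seq (c %/ k ^ (L.-1 - i)) %% k | i <- iota 0 L].

(* P_k(x) = [|x|_{b1}]_k b1 [|x|_{b2}]_k b2 ... for the letters
   b1 > b2 > ... > br occurring in x. *)
Definition Pk (k : nat) (x : seq nat) : seq nat :=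
  flatten [seq base_rep k (count_mem b x) ++ [:: b]
          | b <- rev (iota 0 k) & count_mem b x != 0].

From mathcomp Require Import all_boot.
From mathcomp Require Import zify.

Set Implicit Arguments.
Unset Strict Implicit.
Unset Printing Implicit Defensive.

(* A word of length at most k^e has at most k distinct letters, each counted
   by a number at most k^e, written with at most e+1 digits; so its image has
   length at most k(e+2), which is again at most k^e once e >= 4.  Hence the
   whole orbit lives among the finitely many words of bounded length over
   Sigma_k, and a map iterated inside a finite set is eventually periodic. *)

Section EventuallyPeriodic.

Variables (T : eqType) (f : T -> T) (x : T) (s : seq T).
Hypothesis orbit_in : forall n, iter n f x \in s.

Lemma iter_repeats : exists i j, i < j /\ iter i f x = iter j f x.
Proof.
set orb := [seq iter i f x | i <- iota 0 (size s).+1].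
have /uniqPn : ~~ uniq orb.
  apply/negP => /uniq_leq_size orb_le.
  suff : size orb <= size s by rewrite size_map size_iota ltnn.
  by apply: orb_le => _ /mapP [i _ ->].
move=> /(_ x) [i [j [lt_ij lt_j]]]; rewrite size_map size_iota in lt_j.
rewrite !(nth_map 0) ?size_iota ?(ltn_trans lt_ij) // !nth_iota ?(ltn_trans lt_ij) //.
by exists i, j.
Qed.

Lemma iter_eventually_periodic :
  exists N p, 0 < p /\ forall n, N <= n -> iter (n + p) f x = iter n f x.
Proof.
have [i [j [lt_ij eq_ij]]] := iter_repeats.
exists i, (j - i); split=> [|n le_in]; first by rewrite subn_gt0.
by rewrite -(subnK le_in) -addnA subnKC ?(ltnW lt_ij) // !iterD -eq_ij.
Qed.

End EventuallyPeriodic.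

Fixpoint bounded_words (k n : nat) : seq (seq nat) :=
  if n is n'.+1 then [::] :: [seq a :: w | a <- iota 0 k, w <- bounded_words k n']
  else [:: [::]].

Lemma mem_bounded_words k n w :
  size w <= n -> all (fun a => a < k) w -> w \in bounded_words k n.
Proof.
elim: n w => [|n IH] [|a w] //= le_wn /andP [lt_ak lt_wk].
rewrite in_cons; apply/orP; right.
apply: (allpairs_f (fun a w => a :: w)); first by rewrite mem_iota.
exact: IH.
Qed.

Lemma size_base_rep k c : size (base_rep k c) = (trunc_log k c).+1.
Proof. by rewrite /base_rep size_map size_iota. Qed.

Lemma base_rep_digits k c : 0 < k -> all (fun a => a < k) (base_rep k c).
Proof. by move=> k_gt0; apply/allP => a /mapP [i _ ->]; apply: ltn_pmod. Qed.

Lemma Pk_letters k x : 0 < k -> all (fun a => a < k) (Pk k x).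
Proof.
move=> k_gt0; apply/allP => a /flattenP [w /mapP [b b_in ->]].
rewrite mem_cat mem_seq1 => /orP [a_digit | /eqP ->].
  exact: (allP (base_rep_digits _ k_gt0) _ a_digit).
by move: b_in; rewrite mem_filter mem_rev mem_iota => /andP [_ /andP [_]].
Qed.

Lemma size_flatten_leq (U : Type) (ss : seq (seq U)) B :
  all (fun w => size w <= B) ss -> size (flatten ss) <= size ss * B.
Proof.
elim: ss => [|w ss IH] //= /andP [le_wB le_ssB].
by rewrite size_cat mulSn leq_add // IH.
Qed.

Lemma size_Pk k x e : 1 < k -> size x <= k ^ e -> size (Pk k x) <= k * e.+2.
Proof.
move=> k_gt1 le_x; apply: (leq_trans (size_flatten_leq (B := e.+2) _)).
  apply/allP => _ /mapP [b _ ->].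
  rewrite size_cat size_base_rep addn1 !ltnS.
  rewrite -[e in _ <= e](trunc_expnK e k_gt1) leq_trunc_log //.
  exact: leq_trans (count_size _ _) le_x.
by rewrite leq_mul2r size_map size_filter (leq_trans (count_size _ _)) ?size_rev ?size_iota ?orbT.
Qed.

Lemma add3_leq_expn k e : 1 < k -> 3 <= e -> e + 3 <= k ^ e.
Proof.
move=> k_gt1; elim: e => [|e IH] //; rewrite leq_eqVlt => /orP [/eqP <- | lt3e].
  by apply: (@leq_trans (2 ^ 3)); rewrite // leq_exp2r.
rewrite expnS; apply: leq_trans (leq_mul k_gt1 (IH lt3e)); lia.
Qed.

Theorem theorem1 (k : nat) (hk : 2 <= k) (x0 : seq nat) (hx0 : is_word k x0) :
  exists (N p : nat), 1 <= p /\
    forall n, N <= n -> iter (n + p) (Pk k) x0 = iter n (Pk k) x0.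
Proof.
have k_gt0 : 0 < k by apply: ltnW.
set e := size x0 + 3.
have Pk_stable x : size x <= k ^ e.+1 -> size (Pk k x) <= k ^ e.+1.
  move=> /(size_Pk hk) /leq_trans; apply.
  by rewrite expnS leq_mul2l -addn3 add3_leq_expn ?orbT // leq_addl.
have le_x0 : size x0 <= k ^ e.+1.
  by apply: ltnW; apply: leq_trans (ltn_expl _ hk) _; rewrite leq_exp2l // /e; lia.
apply: (iter_eventually_periodic (s := bounded_words k (k ^ e.+1))) => n.
apply: mem_bounded_words; first by elim: n => //= n; apply: Pk_stable.
by case: n => [|n] /=; [case: hx0 | apply: Pk_letters].
Qed.
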